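(* Let $G$ be an additive group and let $(X,\rho)$ be the metric space described below. The map $\varphi:X\to(0,+\infty)$, $\varphi((f,a_f))=a_f$, is a submetry, i.e. it maps every open ball $B(x,r)$ in $X$ onto the ball of the same radius $r$ centered at $\varphi(x)$ in $(0,+\infty)$ (with the standard metric $|s-t|$).
   Context: A function on an interval $(\alpha,\beta)$ is piecewise constant from the left if for every $x$ there is $\varepsilon>0$ with $f$ constant on $[x-\varepsilon,x]$. $X$ is the set of pairs $(f,a_f)$, $a_f>0$ real, $f:(a_f,+\infty)\to G$ piecewise constant from the left with $f|_{(b_f,+\infty)}\equiv0$ for some $b_f\ge a_f$. Order: $(f,a_f)\preceq(g,a_g)$ iff $a_f\le a_g$ and $f|_{(a_g,+\infty)}=g$; any two elements $p,q$ have a supremum $p\vee q$. Metric: $\rho((f,a_f),(g,a_g))=|a_f-a_g|$ if the pairs are comparable, and $\rho(p,q)=\rho(p,p\vee q)+\rho(p\vee q,q)$ otherwise. *)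

From HB Require Import structures.
From mathcomp Require Import all_boot all_order all_algebra.
From mathcomp Require Import all_classical reals.
From Stdlib Require Import ClassicalEpsilon.
Set Implicit Arguments. Unset Strict Implicit. Unset Printing Implicit Defensive.
Import Order.TTheory GRing.Theory Num.Theory.
Local Open Scope ring_scope.

Section SpaceX.
Variables (R : realType) (G : zmodType).

(* The function f : (a_f, +oo) -> G is represented
   by a total function R -> G normalized to be 0 outside (a_f, +oo), so that
   equality of elements of X is equality of the pairs (f, a_f). *)
Record Xel := MkXel {
  xa : R ;
  xf : R -> G ;
  xa_pos : 0 < xa ;
  xf_out : forall t, t <= xa -> xf t = 0 ;
  xf_plc : forall x, xa < x ->
     exists eps, 0 < eps /\ forall y, x - eps <= y <= x -> xf y = xf x ;
  xf_ev : exists b, xa <= b /\ forall t, b < t -> xf t = 0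
}.

Definition Xle (p q : Xel) : Prop :=
  xa p <= xa q /\ forall t, xa q < t -> xf p t = xf q t.

Definition Xcomparable (p q : Xel) : Prop := Xle p q \/ Xle q p.

Definition is_Xsup (p q s : Xel) : Prop :=
  Xle p s /\ Xle q s /\ forall u, Xle p u -> Xle q u -> Xle s u.

(* the supremum p \/ q (chosen by Hilbert's epsilon among least upper bounds;
   existence is asserted in the paper) *)
Definition Xsup (p q : Xel) : Xel := epsilon (inhabits p) (is_Xsup p q).

Definition rho_cmp (p q : Xel) : R := `|xa p - xa q|.

Definition rho (p q : Xel) : R :=
  if excluded_middle_informative (Xcomparable p q) then rho_cmp p q
  else rho_cmp p (Xsup p q) + rho_cmp (Xsup p q) q.

Definition phi (p : Xel) : R := xa p.

End SpaceX.

From HB Require Import structures.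
From mathcomp Require Import all_boot all_order all_algebra.
From mathcomp Require Import all_classical reals.
From mathcomp Require Import lra.
From Stdlib Require Import ClassicalEpsilon.
Set Implicit Arguments.
Unset Strict Implicit.
Import Order.TTheory GRing.Theory Num.Theory.
Local Open Scope ring_scope.
Local Open Scope classical_set_scope.

(* The triangle inequality through p \/ q shows that rho dominates the
   distance of the projections, so phi maps B(x,r) into the r-ball around
   phi x.  Conversely, for any t > 0 the truncation of f to (t,+oo) is an
   element comparable with x with a-coordinate t, at distance |t - a_x|. *)

Section Submetry.
Variables (R : realType) (G : zmodType).
Implicit Types (p q x : Xel R G) (s t : R).

Lemma rho_comparable p q : Xcomparable p q -> rho p q = `|xa p - xa q|.
Proof.
by move=> pq; rewrite /rho; case: excluded_middle_informative.
Qed.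

Lemma dist_xa_le_rho p q : `|xa p - xa q| <= rho p q.
Proof.
rewrite /rho; case: excluded_middle_informative => ?; [exact: lexx | exact: ler_distD].
Qed.

Lemma xf_left_const x s :
  exists eps, 0 < eps /\ forall y, s - eps <= y <= s -> xf x y = xf x s.
Proof.
have [/xf_plc //|sx] := ltP (xa x) s.
exists 1; split=> // y /andP[_ ys].
by rewrite !xf_out // (le_trans ys).
Qed.

Section Truncation.
Variables (x : Xel R G) (t : R).
Hypothesis t_gt0 : 0 < t.

Definition trunc_fun s : G := if t < s then xf x s else 0.

Lemma trunc_fun_out s : s <= t -> trunc_fun s = 0.
Proof. by rewrite /trunc_fun ltNge => ->. Qed.

Lemma trunc_fun_plc s : t < s ->
  exists eps, 0 < eps /\ forall y, s - eps <= y <= s -> trunc_fun y = trunc_fun s.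
Proof.
move=> ts; have [eps [eps_gt0 epsP]] := xf_left_const x s.
exists (Num.min eps ((s - t) / 2)); split; first by rewrite lt_min eps_gt0 /=; lra.
move=> y /andP[sy ys].
have le_eps : Num.min eps ((s - t) / 2) <= eps by rewrite ge_min lexx.
have le_half : Num.min eps ((s - t) / 2) <= (s - t) / 2 by rewrite ge_min lexx orbT.
have ty : t < y by lra.
rewrite /trunc_fun ts ty; apply: epsP; apply/andP; split; lra.
Qed.

Lemma trunc_fun_ev : exists b, t <= b /\ forall s, b < s -> trunc_fun s = 0.
Proof.
have [b [_ bP]] := xf_ev x.
exists (Num.max b t); split=> [|s]; first by rewrite le_max lexx orbT.
rewrite gt_max => /andP[bs ts]; rewrite /trunc_fun ts; exact: bP.
Qed.

Definition Xtrunc : Xel R G :=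
  MkXel t_gt0 trunc_fun_out trunc_fun_plc trunc_fun_ev.

Lemma xf_Xtrunc s : t < s -> xf Xtrunc s = xf x s.
Proof. by rewrite /= /trunc_fun => ->. Qed.

Lemma Xtrunc_comparable : Xcomparable x Xtrunc.
Proof.
have [xt|tx] := leP (xa x) t.
  by left; split=> // s ts; rewrite xf_Xtrunc.
right; split=> [|s xs]; first exact: ltW.
by rewrite xf_Xtrunc // (lt_trans tx xs).
Qed.

End Truncation.

End Submetry.

Theorem lemma7 (R : realType) (G : zmodType) (x : Xel R G) (r : R) :
  0 < r ->
  (@phi R G) @` [set y | rho x y < r] = [set t : R | 0 < t /\ `|t - phi x| < r].
Proof.
move=> _; apply/seteqP; split.
  move=> _ [y xy <-]; split; first exact: xa_pos.
  by rewrite /phi distrC (le_lt_trans (dist_xa_le_rho x y)).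
move=> t [t_gt0 tx]; exists (Xtrunc x t_gt0) => //=.
by rewrite (rho_comparable (Xtrunc_comparable x t_gt0)) distrC.
Qed.
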